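(* As formal power series in $t$, $$\sum_{n\ge0}R_{1,n}t^n=\frac{\sum_{j=0}^{r}(-1)^j d_j t^j}{\sum_{j=0}^{r+1}(-1)^j c_j t^j},\qquad d_j=\sum_{i=0}^{j}(-1)^{j-i}c_i\,R_{1,j-i}.$$
   Context: Fix $r\ge1$, $I_r=\{1,\dots,r\}$. Let $R_{1,0},\dots,R_{r,0},R_{1,1},\dots,R_{r,1}$ be algebraically independent indeterminates over $\mathbb Q$ and $(R_{\alpha,n})_{0\le\alpha\le r+1,n\in\mathbb Z}$ the $A_r$ $Q$-system: the unique family of nonzero elements of $\mathbb Q(R_{1,0},\dots,R_{r,1})$ with these initial values, $R_{0,n}=R_{r+1,n}=1$, and $R_{\alpha,n+1}R_{\alpha,n-1}=R_{\alpha,n}^2+R_{\alpha+1,n}R_{\alpha-1,n}$ ($\alpha\in I_r$, $n\in\mathbb Z$). For $k\in\{0,\dots,r+1\}$, $c_k$ is the determinant of the matrix obtained from $(R_{1,n+i+j-r-3})_{1\le i,j\le r+2}$ by deleting row $r+2$ and column $r+2-k$ (independent of $n$; $c_0=c_{r+1}=1$). *)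

From HB Require Import structures.
From mathcomp Require Import all_boot all_order all_algebra.
Set Implicit Arguments. Unset Strict Implicit. Unset Printing Implicit Defensive.
Import Order.TTheory GRing.Theory Num.Theory.
Local Open Scope ring_scope.

(* Polynomial ring over Q in n indeterminates, built as iterated univariate
   polynomial rings: mpoly 0 = rat, mpoly (m+1) = (mpoly m)[X_m]. *)
Fixpoint mpoly (n : nat) : idomainType :=
  if n is m.+1 then ({poly mpoly m} : idomainType) else (rat : idomainType).

Fixpoint mvar (n : nat) : nat -> mpoly n :=
  match n return nat -> mpoly n with
  | 0 => fun _ => 0
  | m.+1 => fun i => if i == m then ('X : {poly mpoly m}) else (mvar m i)%:P
  end.

(* The field Q(R_{1,0},...,R_{r,0},R_{1,1},...,R_{r,1}) of rational functions
   in 2r algebraically independent indeterminates. *)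
Definition QF (r : nat) : fieldType := {fraction (mpoly (r + r))}.

Definition QX (r : nat) (i : nat) : QF r := @tofrac (mpoly (r + r)) (mvar (r + r) i).

(* c_k = det of (R_{1, m+i+j-r-3})_{1<=i,j<=r+2} with row r+2 and column
   r+2-k deleted.  0-based indices i',j' : 'I_(r+2) correspond to i'+1, j'+1,
   and column r+2-k (1-based) is 0-based column r+1-k = rev_ord k. *)
Definition cdet (F : comNzRingType) (r : nat) (R1 : int -> F) (m : int)
    (k : 'I_r.+2) : F :=
  \det (col' (rev_ord k) (row' ord_max
     (\matrix_(i < r.+2, j < r.+2)
        R1 (m + (i : nat)%:Z + (j : nat)%:Z - (r : nat)%:Z - 1)%R))).

Definition cc (F : comNzRingType) (r : nat) (R1 : int -> F) (m : int) (k : nat) : F :=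
  if (k <= r.+1)%N then @cdet F r R1 m (inord k) else 0.

Definition dd (F : comNzRingType) (r : nat) (R1 : int -> F) (m : int) (j : nat) : F :=
  \sum_(i < j.+1) (-1) ^+ (j - i) * @cc F r R1 m i * R1 (j - i)%N%:Z.

(* The Hankel determinants H_k(s) = det (R_{1,s+i+j})_{0<=i,j<k} satisfy the
   Desnanot-Jacobi identity
     H_{k+2}(s) H_k(s+2) = H_{k+1}(s) H_{k+1}(s+2) - H_{k+1}(s+1)^2,
   which is the Q-system recursion in disguise, so H_k(n-k+1) = R_{k,n}.  Hence
   H_{r+1} = 1 and H_{r+2} = 0 identically.  The cofactors of the last row of an
   (r+2)-Hankel matrix are then orthogonal to all of its rows and, H_{r+1} being
   invertible, they do not depend on the starting index: R_{1,.} satisfies a linear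
   recurrence of order r+1 whose coefficients are the (-1)^k c_k.  Thus the
   denominator times the series is a polynomial of degree at most r, and its
   coefficients are the d_j by their very definition. *)

From mathcomp Require Import all_boot all_order all_algebra all_fingroup.
From mathcomp Require Import zify.
Set Implicit Arguments. Unset Strict Implicit. Unset Printing Implicit Defensive.
Import Order.TTheory GRing.Theory Num.Theory.
Local Open Scope ring_scope.

Lemma det_row_perm (R : comNzRingType) n (s : 'S_n) (A : 'M[R]_n) :
  \det (row_perm s A) = (-1) ^+ s * \det A.
Proof. by rewrite row_permE det_mulmx det_perm. Qed.

Lemma det_col_perm (R : comNzRingType) n (s : 'S_n) (A : 'M[R]_n) :
  \det (col_perm s A) = (-1) ^+ s * \det A.
Proof. by rewrite col_permE det_mulmx det_perm odd_permV mulrC. Qed.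

Lemma det_conj_perm (R : comNzRingType) n (s : 'S_n) (A : 'M[R]_n) :
  \det (row_perm s (col_perm s A)) = \det A.
Proof. by rewrite det_row_perm det_col_perm mulrA -expr2 sqrr_sign mul1r. Qed.

Lemma det_mx22 (R : comNzRingType) (A : 'M[R]_2) :
  \det A = A 0 0 * A 1 1 - A 0 1 * A 1 0.
Proof.
rewrite (expand_det_row _ 0) !big_ord_recl big_ord0 addr0 /cofactor !det_mx11.
rewrite !mxE /= expr0 expr1 mul1r mulN1r mulrN.
by congr (_ * A _ _ - A _ _ * A _ _); apply: val_inj.
Qed.

Lemma det_ulsub_adj_mul (R : comNzRingType) n1 n2 (A : 'M[R]_(n1 + n2)) :
  \det A * \det (ulsubmx (\adj A)) = \det A ^+ n1 * \det (drsubmx A).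
Proof.
set B := \adj A.
pose X : 'M[R]_(n1 + n2) := block_mx (ulsubmx B) 0 (dlsubmx B) 1%:M.
have := mul_mx_adj A.
rewrite -[A in A *m _]submxK -[B in _ *m B]submxK mulmx_block (scalar_mx_block n1 n2).
case/eq_block_mx => AB_ul _ AB_dl _.
have AX : A *m X = block_mx (\det A)%:M (ursubmx A) 0 (drsubmx A).
  by rewrite -[A in A *m _]submxK mulmx_block AB_ul AB_dl !mulmx0 !mulmx1 !add0r.
have := det_mulmx A X.
by rewrite AX det_ublock det_scalar det_lblock det1 mulr1 => <-.
Qed.

Lemma det_ulsub_adj (R : idomainType) n1 n2 (A : 'M[R]_(n1.+1 + n2)) :
  \det (ulsubmx (\adj A)) = \det A ^+ n1 * \det (drsubmx A).
Proof.
suff minusA (B : 'M[R]_(n1.+1 + n2)) :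
    \det (ulsubmx (\adj (- B))) = \det (- B) ^+ n1 * \det (drsubmx (- B)).
  by rewrite -[A]opprK minusA.
(* The characteristic matrix of [B] has a nonzero determinant, so the identity can
   be cancelled there; it then specializes to [- B] at 0. *)
pose P := char_poly_mx B.
have P_neq0 : \det P != 0 by apply/monic_neq0/char_poly_monic.
have := @det_ulsub_adj_mul _ n1.+1 n2 P; rewrite exprS -mulrA => /(mulfI P_neq0) jacP.
have P_at0 : map_mx (horner_eval 0) P = - B.
  apply/matrixP => i j; rewrite !mxE /= horner_evalE.
  by rewrite hornerD hornerN hornerC hornerMn hornerX mul0rn sub0r.
have := congr1 (horner_eval 0) jacP.
by rewrite rmorphM rmorphXn /= -!det_map_mx map_ulsubmx map_drsubmx map_mx_adj P_at0.
Qed.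

Definition hankel {T : Type} (a : int -> T) (k : nat) (s : int) : 'M[T]_k :=
  \matrix_(i, j) a (s + (i : nat)%:Z + (j : nat)%:Z).

Lemma val_ord_pred n (i : 'I_n) : val (ord_pred i) = if val i is j.+1 then j else n.-1.
Proof.
case: n i => [[]//|n] [[|i] lt_in] /=; first by rewrite modn_small.
by rewrite modnDr modn_small // ltnW.
Qed.

Lemma hankel_Desnanot_Jacobi (R : idomainType) (a : int -> R) k s :
  \det (hankel a k.+2 s) * \det (hankel a k (s + 2)) =
  \det (hankel a k.+1 s) * \det (hankel a k.+1 (s + 2))
  - \det (hankel a k.+1 (s + 1)) ^+ 2.
Proof.
(* [sg] brings the last index to the front: the leading 2x2 block of [A] sits on the
   first and last rows and columns of the Hankel matrix, its trailing block is the
   central [hankel a k (s + 2)]. *)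
pose sg := perm (@ord_pred_inj (2 + k)).
pose tau := perm (@ord_pred_inj k.+1).
have sg_lift0 (p : 'I_k.+1) : sg (lift (lshift k (0 : 'I_2)) p) = p :> nat.
  by rewrite permE val_ord_pred /= /bump.
have sg_lift1 (p : 'I_k.+1) : sg (lift (lshift k (1 : 'I_2)) p) = (ord_pred p).+1 :> nat.
  by rewrite !permE !val_ord_pred /= /bump; case: p => -[].
have sg_rshift (p : 'I_k) : sg (rshift 2 p) = p.+1 :> nat.
  by rewrite permE val_ord_pred.
pose A := row_perm sg (col_perm sg (hankel a (2 + k) s)).
have minor00 : row' (lshift k 0) (col' (lshift k 0) A) = hankel a k.+1 s.
  by apply/matrixP => p q; rewrite !mxE !sg_lift0.
have minor11 : row' (lshift k 1) (col' (lshift k 1) A) =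
    row_perm tau (col_perm tau (hankel a k.+1 (s + 2))) :> 'M_k.+1.
  by apply/matrixP => p q; rewrite !mxE !sg_lift1 !permE; congr (a _); lia.
have minor01 : row' (lshift k 0) (col' (lshift k 1) A) =
    col_perm tau (hankel a k.+1 (s + 1)) :> 'M_k.+1.
  by apply/matrixP => p q; rewrite !mxE sg_lift0 sg_lift1 !permE; congr (a _); lia.
have minor10 : row' (lshift k 1) (col' (lshift k 0) A) =
    row_perm tau (hankel a k.+1 (s + 1)) :> 'M_k.+1.
  by apply/matrixP => p q; rewrite !mxE sg_lift0 sg_lift1 !permE; congr (a _); lia.
have minor_dr : drsubmx A = hankel a k (s + 2).
  by apply/matrixP => p q; rewrite !mxE !sg_rshift; congr (a _); lia.
move: (@det_ulsub_adj _ 1 k A).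
rewrite det_mx22 !mxE /cofactor minor00 minor11 minor01 minor10 minor_dr /=.
rewrite det_conj_perm det_row_perm det_col_perm /A det_conj_perm expr1 => <-.
rewrite modn_small //= expr0 expr1 -signr_odd expr0 !mul1r !mulN1r mulrNN.
by rewrite mulrACA -expr2 sqrr_sign mul1r expr2.
Qed.

Section QsystemHankel.

Variables (F : idomainType) (r : nat) (R : nat -> int -> F).
Hypothesis R0 : forall n, R 0%N n = 1.
Hypothesis Rr1 : forall n, R r.+1 n = 1.
Hypothesis Rrec : forall a n, (1 <= a <= r)%N ->
  R a (n + 1) * R a (n - 1) = R a n ^+ 2 + R a.+1 n * R a.-1 n.
Hypothesis R_neq0 : forall a n, (a <= r.+1)%N -> R a n != 0.

Lemma det_hankel_Qsystem k n : (k <= r.+1)%N ->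
  \det (hankel (R 1%N) k (n - k%:Z + 1)) = R k n.
Proof.
elim/ltn_ind: k n => -[|[|k]] IH n le_k_r1.
- by rewrite det_mx00 R0.
- by rewrite det_mx11 mxE /=; congr (R _ _); lia.
set s := n - k.+2%:Z + 1.
have IHs j t N : (j < k.+2)%N -> t = N - j%:Z + 1 ->
    \det (hankel (R 1%N) j t) = R j N.
  by move=> lt_jk ->; rewrite IH // (leq_trans (ltnW lt_jk)).
have Hk : \det (hankel (R 1%N) k (s + 2)) = R k n by apply: IHs => //; lia.
have Hm : \det (hankel (R 1%N) k.+1 s) = R k.+1 (n - 1) by apply: IHs => //; lia.
have H0 : \det (hankel (R 1%N) k.+1 (s + 1)) = R k.+1 n by apply: IHs => //; lia.
have Hp : \det (hankel (R 1%N) k.+1 (s + 2)) = R k.+1 (n + 1) by apply: IHs => //; lia.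
have Rk_neq0 : R k n != 0 by apply: R_neq0; lia.
apply: (mulIf Rk_neq0).
rewrite -{1}Hk hankel_Desnanot_Jacobi Hm H0 Hp mulrC Rrec //=.
by rewrite addrC addKr.
Qed.

Lemma det_hankel_Qsystem_top s : \det (hankel (R 1%N) r.+1 s) = 1.
Proof.
by rewrite -(Rr1 (s + r%:Z)) -det_hankel_Qsystem //; congr (\det (hankel _ _ _)); lia.
Qed.

Lemma det_hankel_Qsystem_vanish s : \det (hankel (R 1%N) r.+2 s) = 0.
Proof.
have det_r_neq0 : \det (hankel (R 1%N) r (s + 2)) != 0.
  have -> : s + 2 = (s + r.+1%:Z) - r%:Z + 1 by lia.
  by rewrite det_hankel_Qsystem // R_neq0.
apply: (mulIf det_r_neq0).
by rewrite mul0r hankel_Desnanot_Jacobi !det_hankel_Qsystem_top mul1r expr1n subrr.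
Qed.

End QsystemHankel.

Lemma cofactor_hankel_max (R : comNzRingType) (a : int -> R) r s :
  cofactor (hankel a r.+2 s) ord_max ord_max = \det (hankel a r.+1 s).
Proof.
rewrite /cofactor addnn -signr_odd odd_double expr0 mul1r.
by congr (\det _); apply/matrixP => p q; rewrite !mxE !lift_max.
Qed.

Lemma signed_dd (R : comNzRingType) r (a : int -> R) m n :
  (-1) ^+ n * dd r a m n = \sum_(j < n.+1) (-1) ^+ j * cc r a m j * a (n - j)%N%:Z.
Proof.
rewrite /dd big_distrr; apply: eq_bigr => j _ /=.
have le_jn : (j <= n)%N := ltn_ord j.
by rewrite !mulrA -exprD -signr_odd oddD oddB // addbA addbb signr_odd.
Qed.

Lemma cc_rev_cofactor (R : comNzRingType) r (a : int -> R) m (j : 'I_r.+2) :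
  (-1) ^+ rev_ord j * cc r a m (rev_ord j)
  = cofactor (hankel a r.+2 (m - r%:Z - 1)) ord_max j.
Proof.
have inord_rev : inord (rev_ord j) = rev_ord j by apply/val_inj/inordK.
rewrite /cc /cdet -ltnS ltn_ord inord_rev rev_ordK /cofactor.
have sign_rev : (-1) ^+ rev_ord j = (-1) ^+ (r.+1 + j) :> R.
  have le_jr1 : (j <= r.+1)%N := ltn_ord j.
  by rewrite -signr_odd -[RHS]signr_odd /= subSS oddB // oddD /= addNb.
rewrite sign_rev; congr (_ * \det _); apply/matrixP => p q.
by rewrite !mxE; congr (a _); lia.
Qed.

Section HankelRecurrence.

Variables (F : idomainType) (a : int -> F) (r : nat).
Hypothesis det_hankel_top : forall s, \det (hankel a r.+1 s) = 1.
Hypothesis det_hankel_vanish : forall s, \det (hankel a r.+2 s) = 0.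

Lemma cofactor_hankel_orthogonal s (i : nat) : (i <= r.+1)%N ->
  \sum_(j < r.+2) cofactor (hankel a r.+2 s) ord_max j * a (s + i%:Z + j%:Z) = 0.
Proof.
(* Expand along its last row the Hankel matrix whose last row is replaced by row [i]:
   it is singular, having two equal rows unless [i = r.+1]. *)
move=> le_ir1.
pose M := \matrix_(p < r.+2, q < r.+2)
  a (s + (if p == ord_max then i else p)%:Z + q%:Z).
have cofactorM j : cofactor M ord_max j = cofactor (hankel a r.+2 s) ord_max j.
  rewrite /cofactor; congr (_ * \det _); apply/matrixP => p q.
  by rewrite !mxE eq_sym (negbTE (neq_lift _ _)).
have detM : \det M = 0.
  have [lt_ir1|ge_ir1] := ltnP i r.+1.
    have ne_i_max : @Ordinal r.+2 i le_ir1 != ord_max by rewrite -val_eqE /= ltn_eqF.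
    apply: (determinant_alternate ne_i_max) => q.
    by rewrite !mxE eqxx (negbTE ne_i_max).
  have i_max : i = r.+1 by apply/eqP; rewrite eqn_leq le_ir1.
  rewrite -(det_hankel_vanish s); congr (\det _); apply/matrixP => p q.
  by rewrite !mxE i_max; case: eqP => // ->.
rewrite -[RHS]detM (expand_det_row _ ord_max); apply: eq_bigr => j _.
by rewrite cofactorM !mxE eqxx mulrC.
Qed.

Lemma cofactor_hankel_shift s j :
  cofactor (hankel a r.+2 (s + 1)) ord_max j = cofactor (hankel a r.+2 s) ord_max j.
Proof.
(* The difference [d] of the two cofactor rows vanishes at its last entry and is
   orthogonal to the rows of the invertible [hankel a r.+1 (s + 1)]. *)
pose d k := cofactor (hankel a r.+2 (s + 1)) ord_max k - cofactor (hankel a r.+2 s) ord_max k.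
have d_max : d ord_max = 0 by rewrite /d !cofactor_hankel_max !det_hankel_top subrr.
have d_orth (i : 'I_r.+1) :
    \sum_(k < r.+2) d k * a ((s + 1) + (i : nat)%:Z + (k : nat)%:Z) = 0.
  rewrite /d; under eq_bigr do rewrite mulrBl.
  rewrite sumrB cofactor_hankel_orthogonal 1?ltnW // sub0r; apply/eqP; rewrite oppr_eq0.
  rewrite -[X in _ == X](cofactor_hankel_orthogonal s (ltn_ord i)); apply/eqP/eq_bigr => k _.
  by congr (_ * a _); lia.
pose v : 'cV[F]_r.+1 := \col_k d (widen_ord (leqnSn _) k).
have Hv0 : hankel a r.+1 (s + 1) *m v = 0.
  apply/matrixP => i z; rewrite !mxE -[RHS](d_orth i) [RHS]big_ord_recr /= d_max mul0r addr0.
  by apply: eq_bigr => k _; rewrite !mxE mulrC.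
have H_unit : hankel a r.+1 (s + 1) \in unitmx by rewrite unitmxE det_hankel_top unitr1.
have v0 : v = 0 by rewrite -(mulKmx H_unit v) Hv0 mulmx0.
apply/eqP; rewrite -subr_eq0 -/(d j); apply/eqP.
have [lt_jr1|ge_jr1] := ltnP j r.+1.
  have := congr1 (fun u : 'cV_r.+1 => u (Ordinal lt_jr1) 0) v0.
  by rewrite !mxE; congr (d _ = _); apply: val_inj.
suff -> : j = ord_max by [].
by apply/val_inj/eqP; rewrite eqn_leq ge_jr1 -ltnS ltn_ord.
Qed.

Lemma cofactor_hankel_const s t j :
  cofactor (hankel a r.+2 s) ord_max j = cofactor (hankel a r.+2 t) ord_max j.
Proof.
suff shiftn u (n : nat) :
    cofactor (hankel a r.+2 (u + n%:Z)) ord_max j = cofactor (hankel a r.+2 u) ord_max j.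
  wlog le_st : s t / s <= t => [hwlog|].
    by case: (lerP s t) => [|/ltW] /hwlog.
  by rewrite -(shiftn s `|t - s|%N); congr (cofactor (hankel _ _ _) _ _); lia.
elim: n => [|n IHn]; first by rewrite addr0.
by rewrite -IHn -[in RHS]cofactor_hankel_shift; congr (cofactor (hankel _ _ _) _ _); lia.
Qed.

Lemma hankel_linear_recurrence s t :
  \sum_(j < r.+2) cofactor (hankel a r.+2 s) ord_max j * a (t + j%:Z) = 0.
Proof.
rewrite -[RHS](cofactor_hankel_orthogonal t (leq0n r.+1)); apply: eq_bigr => j _.
by rewrite (cofactor_hankel_const s t) addr0.
Qed.

Lemma cc_convolution_eq0 m n : (r < n)%N ->
  \sum_(j < n.+1) (-1) ^+ j * cc r a m j * a (n - j)%N%:Z = 0.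
Proof.
move=> lt_rn; pose G j := (-1) ^+ j * cc r a m j * a (n - j)%N%:Z.
rewrite (bigID (fun j : 'I_n.+1 => (j < r.+2)%N)) /= [X in _ + X]big1 ?addr0; last first.
  by move=> j ge_jr2; rewrite /cc ifN // mulr0 mul0r.
rewrite -(big_ord_widen _ G (lt_rn : (r.+2 <= n.+1)%N)) (reindex_inj rev_ord_inj) /=.
rewrite -[RHS](hankel_linear_recurrence (m - r%:Z - 1) (n%:Z - r%:Z - 1)).
apply: eq_bigr => j _; rewrite /G cc_rev_cofactor; congr (_ * a _).
by have := ltn_ord j; lia.
Qed.

End HankelRecurrence.

Theorem mainTheorem7 (r : nat) (hr : (0 < r)%N) (R : nat -> int -> QF r) :
  (forall n, R 0%N n = 1) ->
  (forall n, R r.+1 n = 1) ->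
  (forall a : 'I_r, R a.+1 0 = QX r a) ->
  (forall a : 'I_r, R a.+1 1 = QX r (r + a)) ->
  (forall a n, (1 <= a <= r)%N ->
     R a (n + 1) * R a (n - 1) = R a n ^+ 2 + R a.+1 n * R a.-1 n) ->
  (forall a n, (a <= r.+1)%N -> R a n != 0) ->
  forall (m : int) (n : nat),
    \sum_(j < n.+1) (-1) ^+ j * @cc (QF r) r (R 1%N) m j * R 1%N (n - j)%N%:Z
    = (if (n <= r)%N then (-1) ^+ n * @dd (QF r) r (R 1%N) m n else 0).
Proof.
(* Neither [0 < r] nor the initial values are needed: the identity holds for every
   nonvanishing solution of the Q-system. *)
move=> R0 Rr1 _ _ Rrec R_neq0 m n.
case: leqP => [_|lt_rn]; first by rewrite signed_dd.
apply: cc_convolution_eq0 lt_rn => s.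
- exact: det_hankel_Qsystem_top.
- exact: det_hankel_Qsystem_vanish.
Qed.
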